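(* Let $x_1,\dots,x_N\in\mathbb{R}^n$ be used directly as tokens, and consider a linear-attention layer with linear per-token maps $q_j=W_Q^\top x_j$, $k_i=W_K^\top x_i$, $v_i=W_V^\top x_i$ and outputs $o_j=\sum_{i=1}^N\langle q_j,k_i\rangle v_i$. Then, with $M=W_QW_K^\top$, $$o_j=\Big[\sum_{i=1}^N (W_V^\top x_i)x_i^\top\Big]M^\top x_j,$$ so $o_j$ is linear in $x_j$ times a quadratic function of $\{x_i\}$ and is odd under the global sign flip $x_i\mapsto -x_i$ (for all $i$ simultaneously): $o_j\mapsto -o_j$. Consequently, neither such a layer nor any finite stack of such layers (each layer's outputs serving as the next layer's tokens) can produce an output equal to a nonzero statistic that is invariant under the global flip, such as $\sum_{i=1}^N x_ix_i^\top$.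
   Context: Linear attention here means attention without softmax: the output at token $j$ is the sum over all tokens $i$ of the inner product of the query of $j$ with the key of $i$, times the value of $i$. ''Pure data tokens'' means there are no constant channels or extra tokens beyond the $x_i$. *)

From HB Require Import structures.
From mathcomp Require Import all_boot all_order all_algebra.
Set Implicit Arguments. Unset Strict Implicit. Unset Printing Implicit Defensive.
Import Order.TTheory GRing.Theory Num.Theory.
Local Open Scope ring_scope.

Definition dotc (R : ringType) (d : nat) (u v : 'cV[R]_d) : R :=
  \sum_(k < d) u k 0 * v k 0.

Definition attn (R : ringType) (n d m N : nat)
  (WQ WK : 'M[R]_(n, d)) (WV : 'M[R]_(n, m)) (X : 'I_N -> 'cV[R]_n)
  (j : 'I_N) : 'cV[R]_m :=
  \sum_(i < N) dotc (WQ^T *m X j) (WK^T *m X i) *: (WV^T *m X i).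

Inductive stack (R : ringType) : nat -> nat -> Type :=
| SNil n : stack R n n
| SCons n d m p : 'M[R]_(n, d) -> 'M[R]_(n, d) -> 'M[R]_(n, m) ->
    stack R m p -> stack R n p.

Fixpoint run (R : ringType) (N : nat) n p (s : stack R n p) :
  ('I_N -> 'cV[R]_n) -> 'I_N -> 'cV[R]_p :=
  match s in stack _ n p return ('I_N -> 'cV[R]_n) -> 'I_N -> 'cV[R]_p with
  | SNil _ => fun X => X
  | SCons _ _ _ _ WQ WK WV s' => fun X => run s' (attn WQ WK WV X)
  end.

Definition flip (R : ringType) (N n : nat) (X : 'I_N -> 'cV[R]_n) :
  'I_N -> 'cV[R]_n := fun i => - X i.

Definition gram (R : ringType) (N n : nat) (X : 'I_N -> 'cV[R]_n) : 'M[R]_n :=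
  \sum_(i < N) X i *m (X i)^T.

From HB Require Import structures.
From mathcomp Require Import all_boot all_order all_algebra.
Set Implicit Arguments. Unset Strict Implicit. Unset Printing Implicit Defensive.
Import Order.TTheory GRing.Theory Num.Theory.
Local Open Scope ring_scope.

(* Every layer is odd under the global flip (each output is a product of
   three token-linear factors), so by induction so is every stack; an odd
   map that is also flip-invariant is its own opposite, hence zero in
   characteristic 0. The Gram statistic is flip-invariant and nonzero on the
   all-ones tokens. *)

Lemma dotcE (R : nzRingType) (d : nat) (u v : 'cV[R]_d) :
  dotc u v = (u^T *m v) 0 0.
Proof. by rewrite mxE; apply: eq_bigr => k _; rewrite mxE. Qed.

Lemma attnE (R : comNzRingType) (n d m N : nat) (WQ WK : 'M[R]_(n, d))
    (WV : 'M[R]_(n, m)) (X : 'I_N -> 'cV[R]_n) (j : 'I_N) :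
  attn WQ WK WV X j =
  (\sum_(i < N) (WV^T *m X i) *m (X i)^T) *m (WQ *m WK^T)^T *m X j.
Proof.
rewrite /attn !mulmx_suml; apply: eq_bigr => i _.
have -> : WV^T *m X i *m (X i)^T *m (WQ *m WK^T)^T *m X j =
          (WV^T *m X i) *m ((WK^T *m X i)^T *m (WQ^T *m X j)).
  by rewrite !trmx_mul !trmxK !mulmxA.
rewrite [_^T *m _]mx11_scalar mul_mx_scalar dotcE; congr (_ *: _).
have trE (A : 'M[R]_1) : A 0 0 = A^T 0 0 by rewrite mxE.
by rewrite [RHS]trE !trmx_mul !trmxK !mulmxA.
Qed.

Section Oddness.

Variables (R : nzRingType) (N : nat).

Lemma attn_odd n d m (WQ WK : 'M[R]_(n, d)) (WV : 'M[R]_(n, m))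
    (X Y : 'I_N -> 'cV[R]_n) :
  Y =1 flip X -> attn WQ WK WV Y =1 flip (attn WQ WK WV X).
Proof.
move=> eqY j; rewrite /flip /attn -sumrN; apply: eq_bigr => i _.
rewrite !eqY /flip !mulmxN scalerN /dotc; congr (- (_ *: _)).
by apply: eq_bigr => k _; rewrite !mxE mulrNN.
Qed.

Lemma run_odd n p (s : stack R n p) (X Y : 'I_N -> 'cV[R]_n) :
  Y =1 flip X -> run s Y =1 flip (run s X).
Proof.
elim: s X Y => [k|k d m q WQ WK WV s IHs] X Y eqY //=.
exact/IHs/attn_odd.
Qed.

Lemma gram_flip n (X : 'I_N -> 'cV[R]_n) : gram (flip X) = gram X.
Proof.
by apply: eq_bigr => i _; rewrite /flip linearN /= mulmxN mulNmx opprK.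
Qed.

Lemma gram_const1 n : gram (fun _ : 'I_N => const_mx 1 : 'cV[R]_n) = const_mx N%:R.
Proof.
rewrite /gram (eq_bigr (fun _ => const_mx 1)); last first.
  by move=> i _; apply/matrixP => u v; rewrite !mxE big_ord1 !mxE mulr1.
by apply/matrixP => u v; rewrite summxE sumr_const card_ord !mxE.
Qed.

End Oddness.

Lemma self_opp_eq0 (F : numFieldType) (V : lmodType F) (v : V) : v = - v -> v = 0.
Proof.
move=> /eqP; rewrite -subr_eq0 opprK -mulr2n -scaler_nat scaler_eq0.
by rewrite pnatr_eq0 => /eqP.
Qed.

Lemma run_flip_invariant_eq0 (R : numFieldType) (N n p : nat) (s : stack R n p)
    (X : 'I_N -> 'cV[R]_n) (j : 'I_N) :
  run s (flip X) j = run s X j -> run s X j = 0.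
Proof. by rewrite (run_odd s (frefl _)) => /esym /self_opp_eq0. Qed.

Theorem proposition6 (R : realFieldType) :
  (* closed form with M = W_Q W_K^T *)
  (forall (n d m N : nat) (WQ WK : 'M[R]_(n, d)) (WV : 'M[R]_(n, m))
     (X : 'I_N -> 'cV[R]_n) (j : 'I_N),
     attn WQ WK WV X j =
     (\sum_(i < N) (WV^T *m X i) *m (X i)^T) *m (WQ *m WK^T)^T *m X j)
  /\
  (* oddness under the global sign flip *)
  (forall (n d m N : nat) (WQ WK : 'M[R]_(n, d)) (WV : 'M[R]_(n, m))
     (X : 'I_N -> 'cV[R]_n) (j : 'I_N),
     attn WQ WK WV (flip X) j = - attn WQ WK WV X j)
  /\
  (* no finite stack equals a flip-invariant statistic unless it is zero *)
  (forall (N n p : nat) (s : stack R n p)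
     (T : ('I_N -> 'cV[R]_n) -> 'I_N -> 'cV[R]_p),
     (forall X, T (flip X) = T X) ->
     (forall X, run s X = T X) ->
     forall X j, T X j = 0)
  /\
  (* in particular, no output token of any stack equals (vec of) sum_i x_i x_i^T *)
  (forall (N n : nat) (s : stack R n (n * n)) (j : 'I_N),
     (0 < n)%N -> (0 < N)%N ->
     ~ (forall X, run s X j = (mxvec (gram X))^T)).
Proof.
split; first exact: attnE.
split; first by move=> n d m N WQ WK WV X; apply: attn_odd.
split.
  move=> N n p s T invT runT X j; rewrite -runT.
  by apply: run_flip_invariant_eq0; rewrite !runT invT.
move=> N n s j n_gt0 N_gt0 runG.
pose X1 := fun _ : 'I_N => const_mx 1 : 'cV[R]_n.
have /run_flip_invariant_eq0 : run s (flip X1) j = run s X1 j.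
  by rewrite !runG gram_flip.
apply/eqP; rewrite runG trmx_eq0 mxvec_eq0 gram_const1.
apply/eqP => /matrixP /(_ (Ordinal n_gt0) (Ordinal n_gt0)) /eqP.
by rewrite !mxE pnatr_eq0 gtn_eqF.
Qed.
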